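(* There exists a linear operator $T:\mathbb{R}[x]\to\mathbb{R}[x]$ which is an infinite order differential operator and a hyperbolicity preserver, but which is not monotone.
   Context: $D=\frac{d}{dx}$. Every linear operator $T:\mathbb{R}[x]\to\mathbb{R}[x]$ can be written uniquely as $T=\sum_{k=0}^\infty Q_k(x)D^k$ with $Q_k\in\mathbb{R}[x]$ (meaning $T[p]=\sum_kQ_kD^k[p]$ for all polynomials $p$). $T$ is an infinite order differential operator if $Q_k\not\equiv0$ for infinitely many $k$. $T$ is a hyperbolicity preserver if $T[p]$ has only real zeros whenever $p$ has only real zeros. $T$ is monotone if the degrees of its nonzero coefficient polynomials are nondecreasing, i.e. $\deg Q_k\le\deg Q_l$ whenever $k<l$ and $Q_k\not\equiv0$, $Q_l\not\equiv0$. *)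

From HB Require Import structures.
From mathcomp Require Import all_boot all_order all_algebra.
Set Implicit Arguments. Unset Strict Implicit. Unset Printing Implicit Defensive.
Import Order.TTheory GRing.Theory Num.Theory.
Local Open Scope ring_scope.

Section Defs.
Variable R : rcfType.

(* p has only real zeros: p factors into linear factors over R
   (over a real closed field R, the zeros of p in R[i] are all in R iff this holds).
   The zero polynomial is counted (lead_coef 0 = 0). *)
Definition only_real_zeros (p : {poly R}) : Prop :=
  exists rs : seq R, p = lead_coef p *: \prod_(r <- rs) ('X - r%:P).

Definition lin_op (T : {poly R} -> {poly R}) : Prop :=
  forall (a : R) (p q : {poly R}), T (a *: p + q) = a *: T p + T q.

(* T = sum_k Q_k(x) D^k  (the sum is finite on each polynomial since D^k p = 0 for k >= size p) *)
Definition diff_rep (T : {poly R} -> {poly R}) (Q : nat -> {poly R}) : Prop :=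
  forall p : {poly R}, T p = \sum_(k < size p) Q k * p^`(k).

Definition infinite_order_coeffs (Q : nat -> {poly R}) : Prop :=
  forall N : nat, exists k : nat, (N <= k)%N /\ Q k != 0.

Definition hyperbolicity_preserver (T : {poly R} -> {poly R}) : Prop :=
  forall p : {poly R}, only_real_zeros p -> only_real_zeros (T p).

(* monotone: deg Q_k <= deg Q_l whenever k < l and both nonzero
   (for nonzero polynomials deg comparison = size comparison) *)
Definition monotone_coeffs (Q : nat -> {poly R}) : Prop :=
  forall k l : nat, (k < l)%N -> Q k != 0 -> Q l != 0 -> (size (Q k) <= size (Q l))%N.

End Defs.

(* The operator T p = x p'(0) + 2 p(0) + p''(0) maps every polynomial to one of
   degree at most one, so it trivially preserves real-rootedness.  Expanding
   p(0) by Taylor's formula at x, p(0) = sum_k p^(k)(x) (-x)^k / k!, shows that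
   T = sum_k Q_k D^k with Q_1 = -x and Q_2 = 1, which breaks monotonicity, while
   for k >= 3 the term (-x)^(k-2)/(k-2)! coming from p''(0) is the only one of
   degree k-2 in Q_k, so Q_k <> 0. *)
From HB Require Import structures.
From mathcomp Require Import all_boot all_order all_algebra.
From mathcomp Require Import ring.
Set Implicit Arguments. Unset Strict Implicit. Unset Printing Implicit Defensive.
Import Order.TTheory GRing.Theory Num.Theory.
Local Open Scope ring_scope.

Lemma horner_map_polyC_X (R : comNzRingType) (q : {poly R}) : (q ^:P).['X] = q.
Proof.
elim/poly_ind: q => [|q c IHq]; first by rewrite rmorph0 horner0.
by rewrite rmorphD rmorphM /= map_polyX map_polyC hornerMXaddC IHq.
Qed.

(* Taylor's formula at x, read in {poly {poly R}}: p(0) = p(x + (-x)). *)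
Lemma polyC_horner0_taylor (R : comNzRingType) (p : {poly R}) n :
  (size p <= n)%N -> (p.[0])%:P = \sum_(i < n) p^`N(i) * (-'X) ^+ i.
Proof.
move=> le_p_n.
have := @nderiv_taylor_wide _ n (p ^:P) 'X (-'X) (mulrC _ _).
rewrite size_map_polyC subrr !horner_coef0 coef_map /= => /(_ le_p_n) ->.
by apply: eq_bigr => i _; rewrite nderivn_map horner_map_polyC_X.
Qed.

Lemma derivn_add (R : nzSemiRingType) (p : {poly R}) m n :
  p^`(m + n) = p^`(m)^`(n).
Proof. by elim: n => [|n IHn]; rewrite ?addn0 ?derivn0 // addnS !derivnS IHn. Qed.

Lemma size_derivn_leq (R : nzSemiRingType) (p : {poly R}) n :
  (size p^`(n) <= size p)%N.
Proof.
apply/leq_sizeP => i le_p_i; rewrite coef_derivn nth_default ?mul0rn //.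
exact: leq_trans le_p_i (leq_addl _ _).
Qed.

Lemma nderivn_scale_fact (R : numFieldType) (p : {poly R}) n :
  (n`!%:R^-1 : R) *: p^`(n) = p^`N(n).
Proof.
by rewrite nderivn_def -scaler_nat scalerA mulVf ?scale1r // pnatr_eq0 -lt0n fact_gt0.
Qed.

Lemma only_real_zeros_size_le2 (R : rcfType) (p : {poly R}) :
  (size p <= 2)%N -> only_real_zeros p.
Proof.
move=> le_p_2.
have p_lin : p = p`_1 *: 'X + (p`_0)%:P.
  apply/polyP => -[|[|i]]; rewrite coefD coefZ coefX coefC /= ?mulr0 ?mulr1 ?add0r ?addr0 //.
  by rewrite nth_default // (leq_trans le_p_2).
have [p1_0 | p1_nz] := eqVneq p`_1 0.
  have p_C : p = (p`_0)%:P by rewrite [LHS]p_lin p1_0 scale0r add0r.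
  by exists [::]; rewrite big_nil alg_polyC {2}p_C lead_coefC -p_C.
pose r := - (p`_0 / p`_1).
have p_fact : p = p`_1 *: ('X - r%:P).
  by rewrite [LHS]p_lin polyCN opprK scalerDr scale_polyC mulrC divfK.
exists [:: r]; rewrite big_seq1.
by rewrite {2}p_fact lead_coefZ lead_coefXsubC mulr1 -p_fact.
Qed.

Section DerivnAt0.
Variable R : rcfType.
Implicit Types (P p : {poly R}) (T S : {poly R} -> {poly R}) (Q : nat -> {poly R}).

Lemma lin_opD T S : lin_op T -> lin_op S -> lin_op (fun p => T p + S p).
Proof. by move=> linT linS a p q; rewrite linT linS scalerDr addrACA. Qed.

Lemma diff_repD T S Q (Q' : nat -> {poly R}) :
  diff_rep T Q -> diff_rep S Q' -> diff_rep (fun p => T p + S p) (fun k => Q k + Q' k).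
Proof.
move=> repT repS p; rewrite repT repS -big_split.
by apply: eq_bigr => k _; rewrite mulrDl.
Qed.

Lemma sum_derivn_widen Q p n : (size p <= n)%N ->
  \sum_(k < size p) Q k * p^`(k) = \sum_(k < n) Q k * p^`(k).
Proof.
move=> le_p_n; rewrite (big_ord_widen n (fun k => Q k * p^`(k))) // big_mkcond.
apply: eq_bigr => k _; case: ltnP => // le_p_k.
by rewrite derivn_poly0 ?mulr0.
Qed.

Definition derivn_at0 j P p := (p^`(j)).[0] *: P.

(* Taylor's formula at x: p^(j)(0) P = sum_(k >= j) P (-x)^(k-j) / (k-j)! p^(k). *)
Definition derivn_at0_coef j P k :=
  if (j <= k)%N then ((k - j)`!%:R^-1 : R) *: (P * (-'X) ^+ (k - j)) else 0.

Lemma lin_op_derivn_at0 j P : lin_op (derivn_at0 j P).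
Proof.
move=> a p q.
by rewrite /derivn_at0 derivnD derivnZ hornerD hornerZ scalerDl scalerA.
Qed.

Lemma diff_rep_derivn_at0 j P : diff_rep (derivn_at0 j P) (derivn_at0_coef j P).
Proof.
move=> p; rewrite (@sum_derivn_widen _ p (j + size p)) ?leq_addl //.
rewrite big_split_ord /= big1 ?add0r => [|k _]; last first.
  by rewrite /derivn_at0_coef leqNgt ltn_ord mul0r.
rewrite /derivn_at0 -mul_polyC (polyC_horner0_taylor (size_derivn_leq p j)) mulr_suml.
apply: eq_bigr => i _; rewrite /derivn_at0_coef leq_addr addKn.
by rewrite -scalerAl scalerAr derivn_add nderivn_scale_fact [RHS]mulrC mulrA mulrAC.
Qed.

End DerivnAt0.

Section Counterexample.
Variable R : rcfType.

Definition nonmonotone_op (p : {poly R}) : {poly R} :=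
  derivn_at0 1 'X p + derivn_at0 0 2 p + derivn_at0 2 1 p.

Definition nonmonotone_coef (k : nat) : {poly R} :=
  derivn_at0_coef 1 'X k + derivn_at0_coef 0 2 k + derivn_at0_coef 2 1 k.

Lemma lin_op_nonmonotone_op : lin_op nonmonotone_op.
Proof.
exact: lin_opD (lin_opD (lin_op_derivn_at0 1 'X) (lin_op_derivn_at0 0 2))
               (lin_op_derivn_at0 2 1).
Qed.

Lemma diff_rep_nonmonotone_op : diff_rep nonmonotone_op nonmonotone_coef.
Proof.
exact: diff_repD (diff_repD (diff_rep_derivn_at0 1 'X) (diff_rep_derivn_at0 0 2))
                 (diff_rep_derivn_at0 2 1).
Qed.

Lemma size_nonmonotone_op p : (size (nonmonotone_op p) <= 2)%N.
Proof.
have size_at0_le2 j (P : {poly R}) : (size P <= 2)%N -> (size (derivn_at0 j P p) <= 2)%N.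
  exact: leq_trans (size_scale_leq _ _).
have size_addr_le2 (q q' : {poly R}) :
    (size q <= 2)%N -> (size q' <= 2)%N -> (size (q + q')%R <= 2)%N.
  by move=> le_q le_q'; rewrite (leq_trans (size_polyD _ _)) // geq_max le_q.
apply/size_addr_le2/size_at0_le2; last by rewrite size_poly1.
apply/size_addr_le2/size_at0_le2; first by apply/size_at0_le2; rewrite size_polyX.
by rewrite -polyC_natr (leq_trans (size_polyC_leq1 _)).
Qed.

Lemma nonmonotone_coef1 : nonmonotone_coef 1 = - 'X.
Proof.
rewrite /nonmonotone_coef /derivn_at0_coef /= !factS fact0 /= subnn subn0 !muln1 invr1 !scale1r.
ring.
Qed.

Lemma nonmonotone_coef2 : nonmonotone_coef 2 = 1.
Proof.
rewrite /nonmonotone_coef /derivn_at0_coef /= !factS fact0 /= subnn subn0 !muln1 invr1 !scale1r.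
rewrite mulr_natl -scaler_nat scalerA mulVf ?pnatr_eq0 // scale1r.
ring.
Qed.

Lemma nonmonotone_coef_neq0 k : nonmonotone_coef k.+3 != 0.
Proof.
rewrite /nonmonotone_coef /derivn_at0_coef /= subn1 subn2 subn0 /=.
apply/eqP => /(congr1 (fun q : {poly R} => q`_k.+1)).
rewrite mulr_natl mul1r -(scaleN1r 'X) !exprZn !coefD !coefZ coefMn coefZ coefXM /= !coefZ !coefXn.
rewrite (ltn_eqF (leqnSn k.+1)) (ltn_eqF (leqnSn k.+2)) eqxx coef0.
rewrite !(mulr0, mul0rn, add0r, mulr1) => /eqP; apply/negP.
by rewrite mulf_neq0 ?invr_eq0 ?pnatr_eq0 -?lt0n ?fact_gt0 ?signr_eq0.
Qed.

End Counterexample.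

Theorem mainTheorem4 (R : rcfType) :
  exists (T : {poly R} -> {poly R}) (Q : nat -> {poly R}),
    [/\ lin_op T, diff_rep T Q, infinite_order_coeffs Q,
        hyperbolicity_preserver T & ~ monotone_coeffs Q].
Proof.
exists (@nonmonotone_op R), (@nonmonotone_coef R); split.
- exact: lin_op_nonmonotone_op.
- exact: diff_rep_nonmonotone_op.
- by move=> N; exists N.+3; split; [rewrite !leqW | exact: nonmonotone_coef_neq0].
- by move=> p _; apply/only_real_zeros_size_le2/size_nonmonotone_op.
- move=> /(_ 1%N 2%N isT); rewrite nonmonotone_coef1 nonmonotone_coef2 oppr_eq0 polyX_eq0 oner_eq0.
  by rewrite size_opp size_polyX size_poly1 => /(_ isT isT).
Qed.
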